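(* Let $X$ be a real Hilbert space and $A,B$ nonempty closed convex subsets of $X$, and let $v$ be the displacement vector of $(A,B)$. Suppose there exist $e\in A\cap(B-v)$ and a continuous linear functional $x^*\in X^*$ with $\|x^*\|=1$ such that $$\inf x^*(B-v)=x^*(e)=\sup x^*(A)$$ and such that $x^*$ strongly exposes $A$ at $e$. Then the couple $(A,B)$ is regular.
   Context: $\mathrm{dist}(x,S)=\inf_{s\in S}\|x-s\|$, $\mathrm{dist}(S,T)=\inf_{s\in S}\mathrm{dist}(s,T)$. $v=P_{\overline{B-A}}(0)$, the metric projection of $0$ onto the closure of $B-A$. $E=\{a\in A:\mathrm{dist}(a,B)=\mathrm{dist}(A,B)\}$, $F=\{b\in B:\mathrm{dist}(b,A)=\mathrm{dist}(A,B)\}$. The couple $(A,B)$ (with $E,F$ nonempty) is regular if for each $\epsilon>0$ there is $\delta>0$ such that $\mathrm{dist}(x,E)\le\epsilon$ whenever $x\in X$ and $\max\{\mathrm{dist}(x,A),\mathrm{dist}(x,B-v)\}\le\delta$. A functional $f\in X^*\setminus\{0\}$ strongly exposes $A$ at $a\in A$ if $f(a)=\sup f(A)$ and every sequence $\{x_n\}\subset A$ with $\lim_n f(x_n)=\sup f(A)$ converges in norm to $a$. *)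

From HB Require Import structures.
From mathcomp Require Import all_boot all_order all_algebra.
From mathcomp Require Import all_classical all_reals all_analysis.
Set Implicit Arguments. Unset Strict Implicit. Unset Printing Implicit Defensive.
Import Order.TTheory GRing.Theory Num.Theory.
Import numFieldNormedType.Exports.
Local Open Scope classical_set_scope.
Local Open Scope ring_scope.

Section Defs.
Context {R : realType} {X : normedModType R}.

Definition inner_product (ip : X -> X -> R) : Prop :=
  (forall x y, ip x y = ip y x) /\
  (forall (a : R) x y z, ip (a *: x + y) z = a * ip x z + ip y z) /\
  (forall x, `|x| ^+ 2 = ip x x).

Definition convex (A : set X) : Prop :=
  forall x y (t : R), A x -> A y -> 0 <= t -> t <= 1 ->
    A (t *: x + (1 - t) *: y).

Definition dist (x : X) (S : set X) : R := inf [set `|x - s| | s in S].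

Definition dist_sets (S T : set X) : R := inf [set dist s T | s in S].

Definition translate (S : set X) (v : X) : set X := [set s - v | s in S].

Definition minus_set (B A : set X) : set X := [set b - a | b in B & a in A].

Definition is_metric_projection (S : set X) (x p : X) : Prop :=
  S p /\ forall s, S s -> `|x - p| <= `|x - s|.

Definition displacement_vector (A B : set X) (v : X) : Prop :=
  is_metric_projection (closure (minus_set B A)) 0 v.

Definition Eset (A B : set X) : set X :=
  [set a | A a /\ dist a B = dist_sets A B].
Definition Fset (A B : set X) : set X :=
  [set b | B b /\ dist b A = dist_sets A B].

Definition regular_couple (A B : set X) (v : X) : Prop :=
  Eset A B !=set0 /\ Fset A B !=set0 /\
  forall eps : R, 0 < eps -> exists2 delta : R, 0 < delta &
    forall x : X, Num.max (dist x A) (dist x (translate B v)) <= delta ->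
      dist x (Eset A B) <= eps.

Definition opnorm (f : X -> R) : \bar R :=
  ereal_sup [set (`|f x|)%:E | x in [set x : X | `|x| <= 1]].

Definition strongly_exposes (f : X -> R) (A : set X) (a : X) : Prop :=
  A a /\ ereal_sup [set (f x)%:E | x in A] = (f a)%:E /\
  forall u : nat -> X, (forall n, A (u n)) ->
    (fun n => f (u n)) @ \oo --> f a -> u @ \oo --> a.

End Defs.

(* Since e lies in A and in B - v, it realises dist(A, B) = |v|, so e belongs to E
   and dist(x, E) <= |x - e|.  If x is delta-close to both A and B - v, pick a in A
   and y in B - v near x; then a - y is small, so by continuity x*(a) is nearly
   x*(y) >= inf x*(B - v) = x*(e) = sup x*(A).  Strong exposure, in its uniform
   form, turns "x*(a) is nearly sup x*(A)" into "a is near e", hence x is near e. *)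
From HB Require Import structures.
From mathcomp Require Import all_boot all_order all_algebra.
From mathcomp Require Import all_classical all_reals all_analysis.
From mathcomp Require Import lra.
Import Order.TTheory GRing.Theory Num.Theory.
Import numFieldNormedType.Exports.
Local Open Scope classical_set_scope.
Local Open Scope ring_scope.

Section Distance.
Context {R : realType} {X : normedModType R}.

Lemma dist_le_norm {S : set X} x {s} : S s -> dist x S <= `|x - s|.
Proof.
move=> Ss; apply: ge_inf; last by exists s.
by exists 0 => _ [y _ <-].
Qed.

Lemma dist_ge (S : set X) x r : S !=set0 ->
  (forall s, S s -> r <= `|x - s|) -> r <= dist x S.
Proof.
move=> [s Ss] lbS; apply: lb_le_inf; first by exists `|x - s|, s.
by move=> _ [y Sy <-]; exact: lbS.
Qed.

Lemma dist_ltP {S : set X} {x r} : S !=set0 -> dist x S < r ->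
  exists2 s, S s & `|x - s| < r.
Proof.
move=> [s Ss] /inf_lt []; first by exists `|x - s|, s.
by move=> _ [y Sy <-] lt_r; exists y.
Qed.

End Distance.

Section Displacement.
Context {R : realType} {X : normedModType R}.
Context {A B : set X} {v : X} (disp_v : displacement_vector A B v).

Lemma displacement_le_norm a b : A a -> B b -> `|v| <= `|a - b|.
Proof.
move=> Aa Bb; have [_ /(_ (b - a))] := disp_v.
rewrite !sub0r !normrN distrC; apply; apply: subset_closure.
by exists b => //; exists a.
Qed.

Context {e : X} (Ae : A e) (Bve : translate B v e).

Let Bev : B (e + v).
Proof. by case: Bve => b Bb <-; rewrite subrK. Qed.

Lemma dist_translate_displacement : dist e B = `|v|.
Proof.
apply/eqP; rewrite eq_le; apply/andP; split.
  by apply: (le_trans (dist_le_norm _ Bev)); rewrite opprD addrA subrr sub0r normrN.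
by apply: dist_ge => [|b Bb]; [exists (e + v) | exact: displacement_le_norm].
Qed.

Lemma dist_sets_displacement : dist_sets A B = `|v|.
Proof.
have lbA : forall a, A a -> `|v| <= dist a B.
  by move=> a Aa; apply: dist_ge => [|b Bb]; [exists (e + v) | exact: displacement_le_norm].
apply/eqP; rewrite eq_le; apply/andP; split.
  rewrite -dist_translate_displacement; apply: ge_inf; last by exists e.
  by exists `|v| => _ [a Aa <-]; exact: lbA.
apply: lb_le_inf; first by exists (dist e B), e.
by move=> _ [a Aa <-]; exact: lbA.
Qed.

Lemma Eset_translate : Eset A B e.
Proof. by split; rewrite // dist_sets_displacement dist_translate_displacement. Qed.

Lemma Fset_translate_nonempty : Fset A B !=set0.
Proof.
exists (e + v); split; rewrite // dist_sets_displacement.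
apply/eqP; rewrite eq_le; apply/andP; split.
  by apply: (le_trans (dist_le_norm _ Ae)); rewrite addrC addKr.
by apply: dist_ge => [|a Aa]; [exists e | rewrite distrC; exact: displacement_le_norm].
Qed.

End Displacement.

Section StrongExposure.
Context {R : realType} {X : normedModType R}.
Context {f : X -> R} {A : set X} {e : X} (fAe : strongly_exposes f A e).

Lemma strongly_exposes_le a : A a -> f a <= f e.
Proof.
have [_ [supAe _]] := fAe.
by move=> Aa; rewrite -lee_fin -supAe; apply: ereal_sup_ubound; exists a.
Qed.

Lemma strongly_exposes_uniform eps : 0 < eps -> exists2 eta, 0 < eta &
  forall a, A a -> f e - eta < f a -> `|a - e| < eps.
Proof.
move=> eps_gt0; apply: contrapT => no_eta.
have far n : exists a, A a /\ f e - n.+1%:R^-1 < f a /\ eps <= `|a - e|.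
  apply: contrapT => no_a; apply: no_eta; exists n.+1%:R^-1 => // a Aa lt_fa.
  by rewrite ltNge; apply/negP => le_eps; apply: no_a; exists a.
have [u uP] := choice far.
have : u @ \oo --> e.
  have [_ [_ ]] := fAe; apply; first by move=> n; case: (uP n).
  apply/cvgrPdist_lt => r r_gt0; near=> n.
  have [Aun [lt_fun _]] := uP n.
  have n_lt : n.+1%:R^-1 < r by near: n; exact: (near_infty_natSinv_lt (PosNum r_gt0)).
  rewrite ger0_norm ?subr_ge0 ?strongly_exposes_le //.
  by apply: (lt_trans _ n_lt); rewrite ltrBlDr addrC -ltrBlDr.
move/cvgrPdist_lt => /(_ eps eps_gt0) [N _ /(_ N (leqnn N))].
by have [_ [_]] := uP N; rewrite distrC => /le_lt_trans le_eps /le_eps; rewrite ltxx.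
Unshelve. all: by end_near.
Qed.

End StrongExposure.

Lemma linear_sub {R : realType} {X : normedModType R} (f : X -> R) :
  (forall (a : R) x y, f (a *: x + y) = a * f x + f y) ->
  forall x y, f (x - y) = f x - f y.
Proof.
move=> lin_f x y.
have f0 : f 0 = 0.
  have := lin_f 1 0 0; rewrite scale1r addr0 mul1r => f0_twice.
  by apply: (addrI (f 0)); rewrite addr0 -f0_twice.
have fN z : f (- z) = - f z by rewrite -(addr0 (- z)) -scaleN1r lin_f f0 mulN1r addr0.
by rewrite -{1}(scale1r x) lin_f fN mul1r.
Qed.

Section CloseToBoth.
Context {R : realType} {X : normedModType R}.
Context {f : X -> R} {A C : set X} {e : X}
  (lin_f : forall (a : R) x y, f (a *: x + y) = a * f x + f y)
  (cont_f : continuous f) (fAe : strongly_exposes f A e)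
  (Ce : C e) (inf_fC : forall y, C y -> f e <= f y).

Lemma close_to_both_close_to_exposed eps : 0 < eps -> exists2 delta, 0 < delta &
  forall x, dist x A <= delta -> dist x C <= delta -> `|x - e| <= eps.
Proof.
move=> eps_gt0.
have [eta eta_gt0 etaP] := strongly_exposes_uniform fAe _ (divr_gt0 eps_gt0 (ltr0n _ 2)).
have /cvgrPdist_lt /(_ eta eta_gt0) /nbhs_norm0P [rho rho_gt0 rhoP] := cont_f 0.
have f0 : f 0 = 0 by rewrite -(subrr 0) linear_sub // subrr.
pose delta := Num.min (eps / 4) (rho / 4).
have delta_gt0 : 0 < delta by rewrite lt_min !divr_gt0.
exists delta => // x dxA dxC.
have delta_lt : delta < delta + delta by rewrite ltrDl.
have [a Aa xa] := dist_ltP (ex_intro _ e (proj1 fAe)) (le_lt_trans dxA delta_lt).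
have [y Cy xy] := dist_ltP (ex_intro _ e Ce) (le_lt_trans dxC delta_lt).
have delta_le_eps : delta <= eps / 4 by rewrite ge_min lexx.
have delta_le_rho : delta <= rho / 4 by rewrite ge_min lexx orbT.
have ay : `|a - y| < rho.
  have := ler_distD x a y; rewrite distrC in xa; lra.
have fay : - eta < f a - f y.
  have /= := rhoP (a - y) ay.
  by rewrite f0 sub0r normrN linear_sub // ltr_norml => /andP[].
have ae : `|a - e| < eps / 2 by apply: etaP Aa _; have := inf_fC y Cy; lra.
have := ler_distD a x e; lra.
Qed.

End CloseToBoth.

Theorem proposition4p15 (R : realType) (X : completeNormedModType R)
    (ip : X -> X -> R) (A B : set X) (v e : X) (xs : X -> R) :
  inner_product ip ->
  A !=set0 -> B !=set0 -> closed A -> closed B -> convex A -> convex B ->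
  displacement_vector A B v ->
  A e -> translate B v e ->
  (forall (a : R) x y, xs (a *: x + y) = a * xs x + xs y) ->
  continuous xs ->
  opnorm xs = 1%:E ->
  ereal_inf [set (xs y)%:E | y in translate B v] = (xs e)%:E ->
  ereal_sup [set (xs y)%:E | y in A] = (xs e)%:E ->
  strongly_exposes xs A e ->
  regular_couple A B v.
Proof.
move=> _ _ _ _ _ _ _ disp_v Ae Bve lin_xs cont_xs _ inf_xs _ exposes.
have inf_le y : translate B v y -> xs e <= xs y.
  by move=> By; rewrite -lee_fin -inf_xs; apply: ereal_inf_lbound; exists y.
have E_e := Eset_translate disp_v Ae Bve.
split; first by exists e.
split; first exact (Fset_translate_nonempty disp_v Ae Bve).
move=> eps /(close_to_both_close_to_exposed lin_xs cont_xs exposes Bve inf_le).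
case=> delta delta_gt0 closeP; exists delta => // x.
rewrite ge_max => /andP[dxA dxB].
exact: le_trans (dist_le_norm x E_e) (closeP x dxA dxB).
Qed.
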